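(* (Metatheory of CPL* natural deduction.) Fix a set $W$ of worlds with a converse well-founded accessibility relation $\prec$. For all contexts $\Gamma,\Gamma'$, worlds $w, w'$, and propositions $A, C$: (i) (Hypothesis) If $A[w] \in \Gamma$, then $\Gamma \vdash_{\mathbf{CPL*}} A[w]$. (ii) (Generalized weakening) If $\Gamma \subseteq_w \Gamma'$ and $\Gamma \vdash_{\mathbf{CPL*}} A[w]$, then $\Gamma' \vdash_{\mathbf{CPL*}} A[w]$. (iii) (Substitution) If $w' \prec^* w$, $\Gamma \vdash_{\mathbf{CPL*}} A[w]$, and $\Gamma, A[w] \vdash_{\mathbf{CPL*}} C[w']$, then $\Gamma \vdash_{\mathbf{CPL*}} C[w']$.
   Context: Fix a set $W$ of worlds and a binary accessibility relation $\prec$ on $W$ that is converse well-founded: there is no infinite chain $w_0 \prec w_1 \prec w_2 \prec \cdots$. $\prec^*$ and $\prec^+$ denote reflexive–transitive and transitive closures. Propositions: $A,B,C ::= Q \mid \bot \mid A \supset B \mid \Diamond A \mid \Box A$, $Q$ atomic. A context $\Gamma$ is a finite collection of judgments $A[w]$ ($w\in W$). $\Gamma \subseteq_w \Gamma'$ holds iff (a) for all $w'$ with $w \prec^* w'$, $A[w'] \in \Gamma$ implies $A[w'] \in \Gamma'$, and (b) for all $w'$ with $w \prec^+ w'$, $A[w'] \in \Gamma'$ implies $A[w'] \in \Gamma$. The judgment $\Gamma \vdash_{\mathbf{CPL*}} A[w]$ (natural deduction for de-tethered constructive provability logic) is defined one world at a time (provability at $w$ after provability at all $w'$ with $w\prec^+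 w'$; well-defined by converse well-foundedness) as the least relation closed under (premises may be meta-level quantifications/implications): (hyp) $\Gamma, A[w] \vdash A[w]$. ($\bot E$) If $w' \prec^* w$ and $\Gamma \vdash \bot[w]$ then $\Gamma \vdash C[w']$. ($\supset I$) If $\Gamma, A[w] \vdash B[w]$ then $\Gamma \vdash A \supset B[w]$. ($\supset E$) If $\Gamma \vdash A \supset B[w]$ and $\Gamma \vdash A[w]$ then $\Gamma \vdash B[w]$. ($\Diamond I$) If $w \prec w'$ and $\Gamma \vdash A[w']$ then $\Gamma \vdash \Diamond A[w]$. ($\Box I$) If $\Gamma \vdash A[w']$ for every $w'$ with $w \prec w'$, then $\Gamma \vdash \Box A[w]$. ($\Diamond E$) If $w'' \prec^* w$, $\Gamma \vdash \Diamond A[w]$, and for every $w'$ with $w \prec w'$, $\Gamma \vdash A[w']$ implies $\Gamma \vdash C[w'']$, then $\Gamma \vdash C[w'']$. ($\Box E$) If $w'' \prec^* w$, $\Gamma \vdash \Box A[w]$, and ($\Gamma \vdash A[w']$ for all $w'$ with $w \prec w'$) implies $\Gamma \vdash C[w'']$, then $\Gamma \vdash C[w'']$. *)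

From Stdlib Require Import List Relations Wellfounded Classical ClassicalEpsilon.
Import ListNotations.

Set Implicit Arguments.

Inductive cprop : Type :=
  | Atom : nat -> cprop
  | Bot : cprop
  | Imp : cprop -> cprop -> cprop
  | Dia : cprop -> cprop
  | Box : cprop -> cprop.

Section CPL.
Variable W : Type.
Variable R : W -> W -> Prop.

Definition ctx := list (cprop * W).

Definition no_inf_chain : Prop :=
  ~ exists f : nat -> W, forall n, R (f n) (f (S n)).

Definition Rplus := clos_trans W R.
Definition Rstar := clos_refl_trans W R.

Definition ctx_sub (w : W) (G G' : ctx) : Prop :=
  (forall w' A, Rstar w w' -> In (A, w') G -> In (A, w') G') /\
  (forall w' A, Rplus w w' -> In (A, w') G' -> In (A, w') G).

(* Provability at the single world v, given provability H at the worlds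
   strictly above v (H w' G A reads "G |- A[w']", only consulted when v <+ w').
   Each rule whose premise is at a world w with v <* w is split into the
   case w = v (recursive) and the case v <+ w (uses H). *)
Inductive prov_at (v : W) (H : W -> ctx -> cprop -> Prop) : ctx -> cprop -> Prop :=
  | r_hyp : forall G A, In (A, v) G -> prov_at v H G A
  | r_botE_here : forall G C, prov_at v H G Bot -> prov_at v H G C
  | r_botE_up : forall G C w, Rplus v w -> H w G Bot -> prov_at v H G C
  | r_impI : forall G A B, prov_at v H ((A, v) :: G) B -> prov_at v H G (Imp A B)
  | r_impE : forall G A B, prov_at v H G (Imp A B) -> prov_at v H G A -> prov_at v H G B
  | r_diaI : forall G A w', R v w' -> H w' G A -> prov_at v H G (Dia A)
  | r_boxI : forall G A, (forall w', R v w' -> H w' G A) -> prov_at v H G (Box A)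
  | r_diaE_here : forall G A C,
      prov_at v H G (Dia A) ->
      (forall w', R v w' -> H w' G A -> prov_at v H G C) ->
      prov_at v H G C
  | r_diaE_up : forall G A C w, Rplus v w -> H w G (Dia A) ->
      (forall w', R w w' -> H w' G A -> prov_at v H G C) ->
      prov_at v H G C
  | r_boxE_here : forall G A C,
      prov_at v H G (Box A) ->
      ((forall w', R v w' -> H w' G A) -> prov_at v H G C) ->
      prov_at v H G C
  | r_boxE_up : forall G A C w, Rplus v w -> H w G (Box A) ->
      ((forall w', R w w' -> H w' G A) -> prov_at v H G C) ->
      prov_at v H G C.

Definition Rabove (x y : W) : Prop := Rplus y x.

Fixpoint prov_acc (v : W) (a : Acc Rabove v) {struct a} : ctx -> cprop -> Prop :=
  match a with
  | Acc_intro _ f =>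
      prov_at v (fun w G A => forall h : Rplus v w, prov_acc (f w h) G A)
  end.

Lemma no_inf_chain_wf : no_inf_chain -> well_founded (fun x y => R y x).
Proof.
  intros Hn.
  assert (Hstep : forall x, ~ Acc (fun x y => R y x) x ->
                  { y | R x y /\ ~ Acc (fun x y => R y x) y }).
  { intros x Hx. apply constructive_indefinite_description.
    apply NNPP; intros Hc. apply Hx. constructor. intros y Hy.
    apply NNPP; intros Hy'. apply Hc. exists y. auto. }
  intros x. apply NNPP; intros Hx.
  pose (T := { z | ~ Acc (fun x y => R y x) z }).
  pose (next := fun t : T => let (z, hz) := t in
                  exist (fun z => ~ Acc (fun x y => R y x) z)
                        (proj1_sig (Hstep z hz)) (proj2 (proj2_sig (Hstep z hz)))).
  pose (g := fix g n := match n with O => exist _ x Hx | S m => next (g m) end).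
  apply Hn. exists (fun n => proj1_sig (g n)). intros n. simpl.
  destruct (g n) as [z hz]. simpl. exact (proj1 (proj2_sig (Hstep z hz))).
Qed.

Lemma no_inf_chain_wf_plus : no_inf_chain -> well_founded Rabove.
Proof.
  intros Hn. apply (wf_incl _ _ (clos_trans W (fun x y => R y x))).
  - intros x y H. unfold Rabove, Rplus in H. induction H.
    + constructor 1. exact H.
    + econstructor 2; eauto.
  - apply wf_clos_trans. apply no_inf_chain_wf. exact Hn.
Qed.

Definition prov (Hn : no_inf_chain) (G : ctx) (A : cprop) (w : W) : Prop :=
  prov_acc (no_inf_chain_wf_plus Hn w) G A.

End CPL.

(* Provability at a world only consults provability strictly above it, so each
   property is proved by well-founded induction on worlds, looking downward:
   inside one world a derivation is rebuilt rule by rule for the new context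
   ([prov_at_transfer]), and the judgments it uses at higher worlds are supplied
   by the induction hypothesis.  The elimination rules also use provability at
   higher worlds as an assumption, so what is needed there is an equivalence;
   hence substitution is proved together with its converse.  For weakening the
   contexts stay related by [ctx_sub] at higher worlds.  For substitution, a
   higher world either still sees the cut formula A[w] (and the induction
   hypothesis removes it) or lies outside the cone below w, where A[w] is
   invisible. *)

From Stdlib Require Import List Relations Classical.

Section Metatheory.
Variable W : Type.
Variable R : W -> W -> Prop.

Lemma Rplus_Rstar_trans {a b c} : Rplus R a b -> Rstar R b c -> Rplus R a c.
Proof.
  intros Hab Hbc; induction Hbc as [b c Hbc | | b c d _ IHbc _ IHcd]; auto.
  exact (t_trans _ _ _ _ _ Hab (t_step _ _ _ _ Hbc)).
Qed.

Section Transfer.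
Variables (v : W) (H H' : W -> ctx W -> cprop -> Prop).
Variable Rel : ctx W -> ctx W -> Prop.
Hypothesis Rel_cons : forall K1 K2 B, Rel K1 K2 -> Rel ((B, v) :: K1) ((B, v) :: K2).
Hypothesis Rel_hyp : forall K1 K2 D, Rel K1 K2 -> In (D, v) K1 -> prov_at R v H' K2 D.
Hypothesis Rel_above : forall K1 K2 y D,
  Rel K1 K2 -> Rplus R v y -> (H y K1 D <-> H' y K2 D).

Lemma prov_at_transfer K1 D :
  prov_at R v H K1 D -> forall K2, Rel K1 K2 -> prov_at R v H' K2 D.
Proof.
  assert (fwd : forall K1 K2 y D, Rel K1 K2 -> Rplus R v y -> H y K1 D -> H' y K2 D)
    by (intros ? ? ? ? HK Hy; apply (Rel_above _ _ _ _ HK Hy)).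
  assert (bwd : forall K1 K2 y D, Rel K1 K2 -> Rplus R v y -> H' y K2 D -> H y K1 D)
    by (intros ? ? ? ? HK Hy; apply (Rel_above _ _ _ _ HK Hy)).
  induction 1 as [G A HA | G C _ IH | G C w Hvw HG | G A B _ IH | G A B _ IHf _ IHa
    | G A w' Hvw HG | G A HG | G A C _ IH _ IHC | G A C w Hvw HG _ IHC
    | G A C _ IH _ IHC | G A C w Hvw HG _ IHC]; intros K2 HK.
  - eauto.
  - eapply r_botE_here; exact (IH K2 HK).
  - eapply r_botE_up; [exact Hvw | exact (fwd _ _ _ _ HK Hvw HG)].
  - apply r_impI, IH, Rel_cons, HK.
  - eapply r_impE; [exact (IHf K2 HK) | exact (IHa K2 HK)].
  - eapply r_diaI; [exact Hvw | exact (fwd _ _ _ _ HK (t_step _ _ _ _ Hvw) HG)].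
  - apply r_boxI; intros w' Hvw'; exact (fwd _ _ _ _ HK (t_step _ _ _ _ Hvw') (HG w' Hvw')).
  - eapply r_diaE_here; [exact (IH K2 HK) | intros w' Hvw' HA].
    exact (IHC w' Hvw' (bwd _ _ _ _ HK (t_step _ _ _ _ Hvw') HA) K2 HK).
  - eapply r_diaE_up; [exact Hvw | exact (fwd _ _ _ _ HK Hvw HG) | intros w' Hww' HA].
    assert (Hvw' : Rplus R v w') by exact (t_trans _ _ _ _ _ Hvw (t_step _ _ _ _ Hww')).
    exact (IHC w' Hww' (bwd _ _ _ _ HK Hvw' HA) K2 HK).
  - eapply r_boxE_here; [exact (IH K2 HK) | intros HA].
    apply IHC; [intros w' Hvw' | exact HK].
    exact (bwd _ _ _ _ HK (t_step _ _ _ _ Hvw') (HA w' Hvw')).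
  - eapply r_boxE_up; [exact Hvw | exact (fwd _ _ _ _ HK Hvw HG) | intros HA].
    apply IHC; [intros w' Hww' | exact HK].
    assert (Hvw' : Rplus R v w') by exact (t_trans _ _ _ _ _ Hvw (t_step _ _ _ _ Hww')).
    exact (bwd _ _ _ _ HK Hvw' (HA w' Hww')).
Qed.

End Transfer.

Lemma prov_at_ext v H H' :
  (forall w G A, Rplus R v w -> (H w G A <-> H' w G A)) ->
  forall G A, prov_at R v H G A -> prov_at R v H' G A.
Proof.
  intros HH' G A HG; eapply prov_at_transfer with (Rel := eq); [| | | exact HG | ]; auto.
  - intros K1 K2 B ->; reflexivity.
  - intros K1 K2 D -> HD; apply r_hyp, HD.
  - intros K1 K2 y D -> Hy; apply HH', Hy.
Qed.

Lemma prov_acc_irrelevant {v} (a a' : Acc (Rabove R) v) G A :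
  prov_acc a G A <-> prov_acc a' G A.
Proof.
  revert v a a' G A; fix IH 2; intros v [f] [f'] G A; simpl.
  split; apply prov_at_ext; intros w G' A' Hw; split; intros HG h.
  - apply (IH w (f w h)), HG.
  - apply (IH w (f w h) (f' w h)), HG.
  - apply (IH w (f w h) (f' w h)), HG.
  - apply (IH w (f w h)), HG.
Qed.

Lemma ctx_sub_same_elems y K1 K2 :
  (forall j, In j K1 <-> In j K2) -> ctx_sub R y K1 K2.
Proof. intros HK; split; intros w A _; apply HK. Qed.

Lemma ctx_sub_cons {y x} B K : ~ Rplus R y x -> ctx_sub R y K ((B, x) :: K).
Proof.
  intros Hyx; split; intros w A Hyw HA; [now right|].
  destruct HA as [HA | HA]; [injection HA as <- <-; contradiction | exact HA].
Qed.

Lemma ctx_sub_uncons {y x} B K : ~ Rstar R y x -> ctx_sub R y ((B, x) :: K) K.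
Proof.
  intros Hyx; split; intros w A Hyw HA; [|now right].
  destruct HA as [HA | HA]; [injection HA as <- <-; contradiction | exact HA].
Qed.

Lemma ctx_sub_above {w y G G'} : Rplus R w y -> ctx_sub R w G G' ->
  ctx_sub R y G G' /\ ctx_sub R y G' G.
Proof.
  intros Hwy [Hup Hdown]; split; split; intros z A Hyz HA.
  - apply Hup, HA; apply clos_t_clos_rt, (Rplus_Rstar_trans Hwy Hyz).
  - apply Hdown, HA; exact (t_trans _ _ _ _ _ Hwy Hyz).
  - apply Hdown, HA; exact (Rplus_Rstar_trans Hwy Hyz).
  - apply Hup, HA; apply clos_t_clos_rt; exact (t_trans _ _ _ _ _ Hwy Hyz).
Qed.

Section WellFounded.
Variable Hn : no_inf_chain R.

Lemma prov_unfold G A v :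
  prov Hn G A v <-> prov_at R v (fun w G A => prov Hn G A w) G A.
Proof.
  unfold prov; destruct (no_inf_chain_wf_plus Hn v) as [f]; simpl.
  split; apply prov_at_ext; intros w G' A' Hw; split.
  - intros HG; exact (proj1 (prov_acc_irrelevant _ _ _ _) (HG Hw)).
  - intros HG h; exact (proj1 (prov_acc_irrelevant _ _ _ _) HG).
  - intros HG h; exact (proj1 (prov_acc_irrelevant _ _ _ _) HG).
  - intros HG; exact (proj1 (prov_acc_irrelevant _ _ _ _) (HG Hw)).
Qed.

Lemma Rplus_irrefl z : ~ Rplus R z z.
Proof.
  induction (no_inf_chain_wf_plus Hn z) as [z _ IH]; intros Hzz.
  exact (IH z Hzz Hzz).
Qed.

Theorem prov_weakening {w G G' A} :
  ctx_sub R w G G' -> prov Hn G A w -> prov Hn G' A w.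
Proof.
  revert G G' A; induction w as [w IH] using (well_founded_ind (no_inf_chain_wf_plus Hn)).
  intros G G' A HGG' HG; apply prov_unfold; apply prov_unfold in HG.
  eapply prov_at_transfer with (Rel := ctx_sub R w); [| | | exact HG | ]; auto.
  - intros K1 K2 B [Hup Hdown]; split; intros w' A' Hww' [HA | HA];
      [now left | right; auto | now left | right; auto].
  - intros K1 K2 D [Hup _] HD; apply r_hyp, Hup, HD; apply rt_refl.
  - intros K1 K2 y D HK Hwy; destruct (ctx_sub_above Hwy HK); split; apply IH; auto.
Qed.

Lemma prov_same_elems y K1 K2 D :
  (forall j, In j K1 <-> In j K2) -> prov Hn K1 D y -> prov Hn K2 D y.
Proof. intros HK; apply prov_weakening, ctx_sub_same_elems, HK. Qed.

Lemma prov_subst_iff {w x} A : Rstar R x w ->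
  forall K D, prov Hn K A w -> (prov Hn ((A, w) :: K) D x <-> prov Hn K D x).
Proof.
  induction x as [x IH] using (well_founded_ind (no_inf_chain_wf_plus Hn)); intros Hxw.
  pose (Rel K1 K2 := prov Hn K2 A w /\ forall j, In j K1 <-> In j ((A, w) :: K2)).
  assert (Hwx : ~ Rplus R w x)
    by (intros Hwx; exact (Rplus_irrefl w (Rplus_Rstar_trans Hwx Hxw))).
  assert (Rel_cons : forall K1 K2 B, Rel K1 K2 -> Rel ((B, x) :: K1) ((B, x) :: K2)).
  { intros K1 K2 B [HA HK]; split.
    - exact (prov_weakening (ctx_sub_cons B K2 Hwx) HA).
    - intros j; simpl; rewrite HK; simpl; tauto. }
  assert (Rel_above : forall K1 K2 y D,
    Rel K1 K2 -> Rplus R x y -> (prov Hn K1 D y <-> prov Hn K2 D y)).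
  { intros K1 K2 y D [HA HK] Hxy.
    transitivity (prov Hn ((A, w) :: K2) D y).
    { split; apply prov_same_elems; intros j; [|symmetry]; apply HK. }
    destruct (classic (Rstar R y w)) as [Hyw | Hyw].
    - exact (IH y Hxy Hyw K2 D HA).
    - assert (Hyw' : ~ Rplus R y w) by (intros Hyw'; apply Hyw, clos_t_clos_rt, Hyw').
      split; apply prov_weakening; [apply ctx_sub_uncons | apply ctx_sub_cons]; assumption. }
  intros K D HA; rewrite !prov_unfold; split; intros HD.
  - eapply prov_at_transfer with (Rel := Rel); [apply Rel_cons | | apply Rel_above | exact HD | ].
    + intros K1 K2 D' [HA' HK] Hin; apply HK in Hin as [Hin | Hin].
      * injection Hin as <- ->; apply prov_unfold, HA'.
      * apply r_hyp, Hin.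
    + split; [exact HA | reflexivity].
  - eapply prov_at_transfer with (Rel := fun K1 K2 => Rel K2 K1);
      [intros; apply Rel_cons; assumption | | | exact HD | ].
    + intros K1 K2 D' [_ HK] Hin; apply r_hyp, HK; right; exact Hin.
    + intros K1 K2 y D' HK Hxy; symmetry; apply Rel_above; assumption.
    + split; [exact HA | reflexivity].
Qed.

End WellFounded.
End Metatheory.

Theorem theorem4 (W : Type) (R : W -> W -> Prop) (Hn : no_inf_chain R) :
  (forall (G : ctx W) (A : cprop) (w : W), In (A, w) G -> prov Hn G A w) /\
  (forall (G G' : ctx W) (A : cprop) (w : W),
      ctx_sub R w G G' -> prov Hn G A w -> prov Hn G' A w) /\
  (forall (G : ctx W) (A C : cprop) (w w' : W),
      Rstar R w' w -> prov Hn G A w -> prov Hn ((A, w) :: G) C w' -> prov Hn G C w').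
Proof.
  split; [|split].
  - intros G A w HA; apply prov_unfold, r_hyp, HA.
  - intros G G' A w; apply prov_weakening.
  - intros G A C w w' Hw'w HA; apply (prov_subst_iff _ _ Hn A Hw'w G C HA).
Qed.
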